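(* Let $1<\rho<2$ be real and $Z[\rho]=\{\pm z: z=\sum_{k=0}^n z_k\rho^k,\ n\ge0,\ z_k\in\{0,1\}\}$. If $\lambda>0$ and $\lambda\mathbb{Z}\subset Z[\rho]$, then $\lambda$ and $\rho$ are of the same type (both algebraic or both transcendental). If $\rho$ is algebraic, then $\rho$ and $\lambda$ both lie in the number field $\mathbb{Q}(\rho)$ and are algebraic integers. *)

From HB Require Import structures.
From mathcomp Require Import all_boot all_order all_algebra.
From mathcomp Require Import reals.
Set Implicit Arguments. Unset Strict Implicit. Unset Printing Implicit Defensive.
Import Order.TTheory GRing.Theory Num.Theory.
Local Open Scope ring_scope.

Definition Zrho (R : realType) (rho x : R) : Prop :=
  exists (n : nat) (d : nat -> bool),
    x = \sum_(k < n.+1) (d k)%:R * rho ^+ k \/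
    x = - \sum_(k < n.+1) (d k)%:R * rho ^+ k.

Definition is_algebraic (R : realType) (x : R) : Prop :=
  algebraicOver (ratr : rat -> R) x.

Definition is_alg_integer (R : realType) (x : R) : Prop :=
  integralOver (intr : int -> R) x.

Definition in_Qfield (R : realType) (rho x : R) : Prop :=
  exists p q : {poly rat},
    (map_poly ratr q).[rho] != 0 /\
    x = (map_poly ratr p).[rho] / (map_poly ratr q).[rho].

From HB Require Import structures.
From mathcomp Require Import all_boot all_order all_algebra.
From mathcomp Require Import reals.
Import Order.TTheory GRing.Theory Num.Theory.
Set Implicit Arguments. Unset Strict Implicit.
Local Open Scope ring_scope.

(* A positive element of Z[rho] is p(rho) for a polynomial p with 0/1
   coefficients and leading coefficient 1.  Write lambda = p1(rho) with
   deg p1 = N1 and (N1 + 2) lambda = p(rho).  Since 1 < rho, the value of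
   such a polynomial of degree N lies between rho^N and (N + 1) rho^N, which
   forces deg p > N1; hence p - (N1 + 2) p1 is a monic integer polynomial
   vanishing at rho, so rho is an algebraic integer, and so is
   lambda = p1(rho), an element of Q(rho).  In particular both are always
   algebraic. *)

Definition digit_poly {R : nzSemiRingType} (N : nat) (d : nat -> bool) : {poly R} :=
  'X^N + \poly_(k < N) (d k)%:R.

Section DigitPoly.

Variables (R : nzSemiRingType) (N : nat) (d : nat -> bool).

Lemma coef_digit_poly i :
  (digit_poly N d : {poly R})`_i = ((i == N) || (i < N)%N && d i)%:R.
Proof.
rewrite coefD coefXn coef_poly.
by case: ltngtP => //= _; rewrite ?add0r ?addr0.
Qed.

Lemma digit_poly_monic : (digit_poly N d : {poly R}) \is monic.
Proof.
by rewrite monicE lead_coefDl ?lead_coefXn // size_polyXn ltnS size_poly.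
Qed.

Lemma size_digit_poly : size (digit_poly N d : {poly R}) = N.+1.
Proof. by rewrite size_polyDl ?size_polyXn // ltnS size_poly. Qed.

Lemma horner_digit_poly (x : R) :
  (digit_poly N d).[x] = x ^+ N + \sum_(k < N) (d k)%:R * x ^+ k.
Proof. by rewrite hornerD hornerXn horner_poly. Qed.

End DigitPoly.

Lemma map_digit_poly (R S : nzSemiRingType) (f : {rmorphism R -> S}) N d :
  map_poly f (digit_poly N d) = digit_poly N d.
Proof. by apply/polyP => i; rewrite coef_map !coef_digit_poly; apply: rmorph_nat. Qed.

Lemma digit_sum_digit_poly (R : nzSemiRingType) (x : R) n (d : nat -> bool) :
  \sum_(k < n) (d k)%:R * x ^+ k != 0 ->
  exists N, \sum_(k < n) (d k)%:R * x ^+ k = (digit_poly N d).[x].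
Proof.
elim: n => [|n IHn]; first by rewrite big_ord0 eqxx.
rewrite big_ord_recr /=; case: (d n) => /=; last by rewrite mul0r addr0.
by exists n; rewrite horner_digit_poly mul1r addrC.
Qed.

Lemma Zrho_digit_poly (R : realType) (rho x : R) :
  0 <= rho -> Zrho rho x -> 0 < x -> exists N d, x = (digit_poly N d).[rho].
Proof.
move=> rho_ge0 [n [d xE]].
have sum_ge0 : 0 <= \sum_(k < n.+1) (d k)%:R * rho ^+ k.
  by apply: sumr_ge0 => k _; rewrite mulr_ge0 ?exprn_ge0.
case: xE => -> x_gt0; last by rewrite oppr_gt0 ltNge sum_ge0 in x_gt0.
have [N ->] := digit_sum_digit_poly (lt0r_neq0 x_gt0).
by exists N, d.
Qed.

Section DigitPolyBounds.

Variables (R : numDomainType) (rho : R).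
Hypothesis rho_ge1 : 1 <= rho.

Lemma digit_poly_bounds N (d : nat -> bool) :
  rho ^+ N <= (digit_poly N d).[rho] <= N.+1%:R * rho ^+ N.
Proof.
have rho_ge0 : 0 <= rho := le_trans ler01 rho_ge1.
rewrite horner_digit_poly; apply/andP; split.
  by rewrite lerDl; apply: sumr_ge0 => k _; rewrite mulr_ge0 ?exprn_ge0.
rewrite mulr_natl mulrS lerD2l -[N in _ *+ N]card_ord -sumr_const.
apply: ler_sum => k _.
apply: le_trans (ler_weXn2l rho_ge1 (ltnW (ltn_ord k))).
by case: (d k); rewrite ?mul1r ?mul0r ?exprn_ge0.
Qed.

(* The factor N1 + 2 beats the factor N1 + 1 of the upper bound at degree N1. *)
Lemma digit_poly_multiple_deg N1 N (d1 d : nat -> bool) :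
  N1.+2%:R * (digit_poly N1 d1).[rho] = (digit_poly N d).[rho] -> (N1 < N)%N.
Proof.
move=> valE; rewrite ltnNge; apply/negP => le_N_N1.
have /andP[low1 _] := digit_poly_bounds N1 d1.
have /andP[_ upp] := digit_poly_bounds N d.
have rhoN1_gt0 : 0 < rho ^+ N1 by rewrite exprn_gt0 // (lt_le_trans ltr01).
have upp1 : N.+1%:R * rho ^+ N <= N1.+1%:R * rho ^+ N1.
  apply: ler_pM; rewrite ?ler0n ?exprn_ge0 ?ler_nat ?ltnS ?ler_weXn2l //.
  exact: le_trans ler01 rho_ge1.
have : N1.+1%:R * rho ^+ N1 < (digit_poly N d).[rho].
  rewrite -valE; apply: lt_le_trans (ler_wpM2l (ler0n _ _) low1).
  by rewrite ltr_pM2r // ltr_nat.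
by move=> /lt_le_trans/(_ (le_trans upp upp1)); rewrite ltxx.
Qed.

End DigitPolyBounds.

Lemma digit_poly_multiple_integral (R : comNzRingType) (x : R) m N1 N
    (d1 d : nat -> bool) :
  (N1 < N)%N -> m%:R * (digit_poly N1 d1).[x] = (digit_poly N d).[x] ->
  integralOver (intr : int -> R) x.
Proof.
move=> lt_N1_N valE; exists (digit_poly N d - m%:R *: digit_poly N1 d1).
  rewrite monicE lead_coefDl ?(monicP (digit_poly_monic _ _ _)) //.
  by rewrite size_polyN size_digit_poly (leq_ltn_trans (size_scale_leq _ _))
    ?size_digit_poly.
by rewrite rootE rmorphB /= linearZ /= rmorph_nat !map_digit_poly hornerD hornerN
  hornerZ valE subrr.
Qed.

Lemma integral_digit_poly (S K : comNzRingType) (f : {rmorphism S -> K}) (x : K)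
    N (d : nat -> bool) :
  integralOver f x -> integralOver f (digit_poly N d).[x].
Proof.
apply: integral_horner; apply/integral_poly => i.
by rewrite coef_digit_poly; apply: integral_nat.
Qed.

Lemma integral_intr_ratr (R : numFieldType) (x : R) :
  integralOver (intr : int -> R) x -> integralOver (ratr : rat -> R) x.
Proof.
case=> p p_monic px0; exists (map_poly intr p); first exact: monic_map.
by rewrite -map_poly_comp (eq_map_poly (ratr_int _)).
Qed.

Lemma in_Qfield_horner (R : realType) (rho : R) (p : {poly rat}) :
  in_Qfield rho (map_poly ratr p).[rho].
Proof. by exists p, 1; rewrite rmorph1 hornerC divr1 oner_neq0. Qed.

Theorem mainTheorem13 (R : realType) (rho lambda : R) :
  1 < rho -> rho < 2 -> 0 < lambda ->
  (forall m : int, Zrho rho (lambda * m%:~R)) ->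
  (is_algebraic lambda <-> is_algebraic rho) /\
  (is_algebraic rho ->
     in_Qfield rho rho /\ in_Qfield rho lambda /\
     is_alg_integer rho /\ is_alg_integer lambda).
Proof.
move=> rho_gt1 _ lambda_gt0 lambdaZ.
have rho_ge1 := ltW rho_gt1; have rho_ge0 := le_trans ler01 rho_ge1.
have Zrho_lambda_nat n : Zrho rho (n%:R * lambda).
  by rewrite mulrC pmulrn; apply: lambdaZ.
have [N1 [d1 lambdaE]] : exists N1 d1, lambda = (digit_poly N1 d1).[rho].
  apply: Zrho_digit_poly rho_ge0 _ lambda_gt0.
  by have := Zrho_lambda_nat 1%N; rewrite mul1r.
have [N [d multE]] : exists N d, N1.+2%:R * lambda = (digit_poly N d).[rho].
  by apply: Zrho_digit_poly rho_ge0 _ _; rewrite ?pmulr_rgt0.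
rewrite lambdaE in multE.
have rho_int : is_alg_integer rho.
  exact: digit_poly_multiple_integral (digit_poly_multiple_deg rho_ge1 multE) multE.
have lambda_int : is_alg_integer lambda by rewrite lambdaE; apply: integral_digit_poly.
have alg_of_int x : is_alg_integer x -> is_algebraic x.
  by move=> /integral_intr_ratr /integral_algebraic.
split=> [|_]; first by split=> _; apply: alg_of_int.
split; first by have := in_Qfield_horner rho 'X; rewrite map_polyX hornerX.
split=> //; have := in_Qfield_horner rho (digit_poly N1 d1).
by rewrite map_digit_poly -lambdaE.
Qed.
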